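(* In the setting of the context, fix $i,j\in\{1,\dots,n-1\}$, $i\ne j$. Regard the conditional expectation $$\mathbb E_{\mathbb P}[\bar d_j\mid\bar d_i\in\mathcal W_{\delta_i}]=d-\sqrt{\frac{2}{\pi}}\,\frac{\rho_{ji}\,\sigma_j\,e^{-\frac{(d_i^*-d)^2}{2\sigma_i^2}}}{1+\mathrm{erf}\!\left(\frac{d_i^*-d}{\sqrt2\,\sigma_i}\right)}$$ as a function of the diffusion coefficient $g>0$ (all other parameters fixed). Then it is monotonically increasing in $g$ if $\rho_{ji}<0$ and monotonically decreasing in $g$ if $\rho_{ji}>0$. Moreover, for the ambiguity set $\mathcal M_g=\{g>0: (1-\epsilon)g_0^2\le g^2\le(1+\epsilon)g_0^2\}$, the distributionally robust cascading risk $$\mathcal R^{ji}:=\frac{d}{\inf_{\mathcal M_g}\mathbb E_{\mathbb P}[\bar d_j\mid\bar d_i\in\mathcal W_{\delta_i}]}-1$$ equals $\frac{d}{h(-\epsilon)}-1$ if $\rho_{ji}<0$, $\frac{d}{h(\epsilon)}-1$ if $\rho_{ji}>0$, and $0$ if $\rho_{ji}=0$, where $$h(\epsilon)=d-\sqrt{\frac{2}{\pi}}\,\frac{\rho_{ji}\,\sigma_{j,0}\sqrt{1+\epsilon}\;e^{-\frac{(d_i^*-d)^2}{2\sigma_{i,0}^2(1+\epsilon)}}}{1+\mathrm{erf}\!\left(\frac{d_i^*-d}{\sqrt{2(1+\epsilon)}\,\sigma_{i,0}}\right)}.$$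
   Context: Platoon of $n\ge 3$ vehicles with positions $\mathrm{x}_t\in\mathbb R^n$ and velocities $\mathrm{v}_t\in\mathbb R^n$ obeying $d\mathrm{x}_t=\mathrm{v}_t\,dt$, $d\mathrm{v}_t=-L\mathrm{v}_{t-\tau}dt-\beta L(\mathrm{x}_{t-\tau}-\mathrm{y})dt+g\,d\boldsymbol\xi_t$, where $L$ is the Laplacian of a connected undirected positively weighted graph with eigenvalues $0=\lambda_1<\lambda_2\le\dots\le\lambda_n$ and orthonormal eigenvectors $q_1=\frac1{\sqrt n}\mathbf 1_n,\dots,q_n$; $\mathrm{y}=[d,2d,\dots,nd]^T$, $d>0$; $\beta>0$; delay $\tau>0$; diffusion coefficient $g>0$; $\boldsymbol\xi_t$ a standard $n$-dimensional Wiener process. Stability $(\lambda_k\tau,\beta\tau)\in S$ for $k=2,\dots,n$ is assumed, with $S=\{(s_1,s_2): s_1\in(0,\pi/2),\ s_2\in(0,a/\tan a),\ a\in(0,\pi/2)\text{ solving }a\sin a=s_1\}$. The steady-state inter-vehicle distances $\bar d_k=\lim(x^{(k+1)}_t-x^{(k)}_t)$ form $\bar{\boldsymbol d}\sim\mathcal N(d\mathbf 1_{n-1},\Sigma)$ (standing known fact) with $\sigma_{kl}=g^2\frac{\tau^3}{2\pi}\sum_{m=1}^n(\tilde e_k^Tq_m)(\tilde e_l^Tq_m)f(\lambda_m\tau,\beta\tau)$, $\tilde e_k=e_{k+1}-e_k$, $f(s_1,s_2)=\int_{\mathbb R}\frac{dr}{(s_1s_2-r^2\cos r)^2+r^2(s_1-r\sin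 r)^2}$. Write $\sigma_k^2=\sigma_{kk}$ and $\rho_{ji}=\sigma_{ji}/(\sigma_i\sigma_j)$ (independent of $g$). $\mathcal W_{\delta_i}=(-\infty,d_i^* )$ with $d_i^*=d/(\delta_i+c)$, $\delta_i\ge0$, $c>0$ a constant. $g_0>0$ is a nominal estimate of $g$, $\epsilon\in(0,1)$, and $\sigma_{k,0}$ denotes $\sigma_k$ evaluated at $g=g_0$. $\mathrm{erf}(x)=\frac2{\sqrt\pi}\int_0^xe^{-t^2}dt$. *)

From HB Require Import structures.
From mathcomp Require Import all_boot all_order all_algebra.
From mathcomp Require Import all_classical all_reals all_analysis.
Set Implicit Arguments. Unset Strict Implicit. Unset Printing Implicit Defensive.
Import Order.TTheory GRing.Theory Num.Theory.
Local Open Scope classical_set_scope.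
Local Open Scope ring_scope.

Section Defs.
Variable R : realType.

Definition erf (x : R) : R :=
  2 / Num.sqrt pi *
  (if 0 <= x then Rintegral lebesgue_measure `[0, x] (fun t => expR (- t ^+ 2))
   else - Rintegral lebesgue_measure `[x, 0] (fun t => expR (- t ^+ 2))).

Definition fdelay (s1 s2 : R) : R :=
  Rintegral lebesgue_measure setT
    (fun r => ((s1 * s2 - r ^+ 2 * cos r) ^+ 2 + r ^+ 2 * (s1 - r * sin r) ^+ 2)^-1).

Definition stab_region (s1 s2 : R) : Prop :=
  0 < s1 < pi / 2 /\
  exists a : R, [/\ 0 < a < pi / 2, a * sin a = s1 & 0 < s2 < a / tan a].

Definition laplacian n (W : 'M[R]_n) : 'M[R]_n :=
  \matrix_(a, b) ((a == b)%:R * (\sum_k W a k) - W a b).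

Definition conn_pos_weighted_graph n (W : 'M[R]_n) : Prop :=
  [/\ W^T = W, (forall a b, 0 <= W a b), (forall a, W a a = 0)
    & forall a b, connect [rel x y | 0 < W x y] a b].

(* column vector \tilde e_k = e_{k+1} - e_k  (0-based: k in 'I_(n-1)) *)
Definition etilde n (k : 'I_n.-1) : 'cV[R]_n :=
  \col_l ((if (l : nat) == k.+1 then 1 else 0) - (if (l : nat) == k then 1 else 0)).

Definition dotv n (u v : 'cV[R]_n) : R := \sum_l u l 0 * v l 0.

Definition sigma_kl n (lam : 'I_n -> R) (q : 'I_n -> 'cV[R]_n) (beta tau g : R)
  (k l : 'I_n.-1) : R :=
  g ^+ 2 * tau ^+ 3 / (2 * pi) *
  \sum_(m < n) dotv (etilde k) (q m) * dotv (etilde l) (q m) * fdelay (lam m * tau) (beta * tau).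

Definition sigma_k n lam q beta tau g (k : 'I_n.-1) : R :=
  Num.sqrt (sigma_kl lam q beta tau g k k).

Definition rho_kl n lam q beta tau g (k l : 'I_n.-1) : R :=
  sigma_kl lam q beta tau g k l / (sigma_k lam q beta tau g l * sigma_k lam q beta tau g k).

(* E[ \bar d_j | \bar d_i \in W_{delta_i} ] as given by the closed formula *)
Definition condE n lam q beta tau (d dstar g : R) (i j : 'I_n.-1) : R :=
  d - Num.sqrt (2 / pi) *
      (rho_kl lam q beta tau g j i * sigma_k lam q beta tau g j *
       expR (- (dstar - d) ^+ 2 / (2 * sigma_k lam q beta tau g i ^+ 2))) /
      (1 + erf ((dstar - d) / (Num.sqrt 2 * sigma_k lam q beta tau g i))).

(* h(e) with sigma_{k,0} = sigma_k at g = g0 *)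
Definition hfun n lam q beta tau (d dstar g0 : R) (i j : 'I_n.-1) (e : R) : R :=
  d - Num.sqrt (2 / pi) *
      (rho_kl lam q beta tau g0 j i * sigma_k lam q beta tau g0 j * Num.sqrt (1 + e) *
       expR (- (dstar - d) ^+ 2 / (2 * sigma_k lam q beta tau g0 i ^+ 2 * (1 + e)))) /
      (1 + erf ((dstar - d) / (Num.sqrt (2 * (1 + e)) * sigma_k lam q beta tau g0 i))).

Definition Mg (g0 eps : R) : set R :=
  [set g | 0 < g /\ (1 - eps) * g0 ^+ 2 <= g ^+ 2 <= (1 + eps) * g0 ^+ 2].

Definition DRrisk n lam q beta tau (d dstar g0 eps : R) (i j : 'I_n.-1) : R :=
  d / inf [set condE lam q beta tau d dstar g i j | g in Mg g0 eps] - 1.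

End Defs.

From Pilot Require Import Defs.
From HB Require Import structures.
From mathcomp Require Import all_boot all_order all_algebra.
From mathcomp Require Import all_classical all_reals all_analysis.
From mathcomp Require Import measurable_realfun ring.
Import Order.TTheory GRing.Theory Num.Theory.
Import numFieldNormedType.Exports.
Local Open Scope classical_set_scope.
Local Open Scope ring_scope.

(* [sigma_kl] scales like [g ^+ 2], so [sigma_k] scales like [g] and [rho_kl] does
   not depend on [g]: the conditional expectation is [d - C * rho * P g] with
   [C > 0] and [P g = g * expR (- a ^+ 2 / (2 * (g * s) ^+ 2)) / (1 + erf (K / g))],
   where [K = a / (sqrt 2 * s)].  Writing [(sqrt pi / 2) * (1 + erf x)] as the
   integral of [expR (- t ^+ 2)] over [t <= x] and substituting [t = g * v + K / g] gives
   [P g = (sqrt pi / 2) / \int_(v <= 0) expR (- g ^+ 2 * v ^+ 2 - 2 * K * v)],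
   whose integrand decreases strictly in [g]; hence [P] is strictly increasing.
   The ambiguity set is the interval [[g0 * sqrt (1 - eps), g0 * sqrt (1 + eps)]],
   so the infimum of the monotone conditional expectation over it is attained at
   the endpoint selected by the sign of [rho], where it is [h (- eps)] or [h eps]. *)

Section gauss_integral.
Context {R : realType}.
Local Notation mu := (@lebesgue_measure R).

Lemma continuous_measurable_EFin (f : R -> R) (D : set R) :
  measurable D -> continuous f -> measurable_fun D (fun x => (f x)%:E).
Proof.
move=> mD cf; apply/measurable_EFinP; apply: measurable_funTS.
exact: continuous_measurable_fun.
Qed.

Lemma integral_itvcc_EFin (f : R -> R) a b : continuous f ->
  (\int[mu]_(x in `[a, b]) (f x)%:E)%E = (\int[mu]_(x in `[a, b]) f x)%:E.
Proof.
move=> cf; rewrite /Rintegral fineK//; apply: integrable_fin_num => //.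
apply: continuous_compact_integrable; first exact: segment_compact.
exact: continuous_subspaceT.
Qed.

Lemma integralNy_itv_split (f : R -> R) :
  continuous f -> (forall x, 0 <= f x) -> forall a b, a <= b ->
  (\int[mu]_(x in `]-oo, b]) (f x)%:E =
   \int[mu]_(x in `]-oo, a]) (f x)%:E + (\int[mu]_(x in `[a, b]) f x)%:E)%E.
Proof.
move=> cf f0 a b ab.
rewrite (@itv_bndbnd_setU _ _ -oo%O (BRight a) (BRight b)) ?bnd_simp //.
rewrite ge0_integral_setU //.
- rewrite integral_itv_obnd_cbnd; last exact: continuous_measurable_EFin.
  by rewrite integral_itvcc_EFin.
- by apply: continuous_measurable_EFin => //; apply: measurableU.
- by move=> x _; rewrite lee_fin.
- rewrite disj_set2E; apply/eqP; rewrite -subset0 => x [] /=.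
  by rewrite !in_itv /= => xa /andP[ax _]; move: (lt_le_trans ax xa); rewrite ltxx.
Qed.

Lemma integralNy0_gauss :
  (\int[mu]_(x in `]-oo, 0%R]) (gauss_fun x)%:E = (Num.sqrt pi / 2)%:E)%E.
Proof.
have := @ge0_integration_by_substitutionNy R gauss_fun 0.
rewrite oppr0 => ->.
- rewrite -integral0y_gauss; apply: eq_integral => x _.
  by rewrite /= /gauss_fun sqrrN.
- by apply: continuous_subspaceT; exact: continuous_gauss_fun.
- by move=> x _; exact: gauss_fun_ge0.
Qed.

Lemma integralNy_gauss x :
  (\int[mu]_(t in `]-oo, x]) (gauss_fun t)%:E = (Num.sqrt pi / 2 * (1 + erf x))%:E)%E.
Proof.
have sqrtpi_neq0 : Num.sqrt (pi : R) != 0 by rewrite gt_eqF // sqrtr_gt0 pi_gt0.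
have split_gauss := @integralNy_itv_split _ continuous_gauss_fun gauss_fun_ge0.
rewrite /erf; case: ifPn => [x0|]; rewrite -/(gauss_fun _).
- rewrite (split_gauss _ _ x0) integralNy0_gauss -EFinD; congr EFin.
  by rewrite /gauss_fun; field.
- rewrite -ltNge => /ltW /split_gauss; rewrite integralNy0_gauss => split0.
  set I := Rintegral _ _ _ in split0 *.
  have -> : (Num.sqrt pi / 2 * (1 + 2 / Num.sqrt pi * - I))%:E =
            ((Num.sqrt pi / 2)%:E - I%:E)%E by rewrite -EFinB; congr EFin; field.
  by rewrite split0 addeK.
Qed.

Lemma derive1_affine (a b : R) : derive1 (fun v : R => a * v + b) = cst a.
Proof.
apply/funext => v; rewrite derive.derive1E.
by rewrite derive_val addr0 /= -[RHS]mulr1.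
Qed.

(* [gauss_fun (g * v + K / g) = expR (- (K / g) ^+ 2) * gauss_shift g K v] *)
Definition gauss_shift (g K v : R) : R := expR (- g ^+ 2 * v ^+ 2 - 2 * K * v).

Lemma continuous_gauss_shift g K : continuous (gauss_shift g K).
Proof.
move=> x; apply: continuous_comp; last exact: continuous_expR.
apply: cvgB; apply: cvgM; [exact: cvg_cst | exact: exprn_continuous
                          | exact: cvg_cst | exact: cvg_id].
Qed.

Lemma gauss_shift_lt g1 g2 K v : 0 < g1 -> g1 < g2 -> v != 0 ->
  gauss_shift g2 K v < gauss_shift g1 K v.
Proof.
move=> g1_gt0 g12 v0; rewrite ltr_expR ltrD2r ltr_pM2r ?exprn_even_gt0 //.
by rewrite ltrN2 ltr_pXn2r // ?nnegrE ltW // (lt_trans g1_gt0).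
Qed.

Lemma gauss_shift_le g1 g2 K v : 0 < g1 -> g1 < g2 ->
  gauss_shift g2 K v <= gauss_shift g1 K v.
Proof.
move=> g1_gt0 g12; have [->|v0] := eqVneq v 0.
  by rewrite /gauss_shift !(expr0n, mulr0, subr0).
exact/ltW/gauss_shift_lt.
Qed.

Lemma integralNy_gauss_shift (g K : R) : 0 < g ->
  (\int[mu]_(t in `]-oo, (K / g)%R]) (gauss_fun t)%:E =
   (g * expR (- (K / g) ^+ 2))%:E *
   \int[mu]_(v in `]-oo, 0%R]) (gauss_shift g K v)%:E)%E.
Proof.
move=> g0.
have := @increasing_ge0_integration_by_substitutionNy R (fun v => g * v + K / g) gauss_fun 0.
rewrite mulr0 add0r derive1_affine => ->.
- rewrite -ge0_integralZl //.
  + apply: eq_integral => v _; congr EFin; rewrite /= /gauss_fun /gauss_shift.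
    rewrite !fctE /= [LHS]mulrC -(mulrA g) -expRD; congr (_ * expR _).
    by field; rewrite gt_eqF.
  + by apply: continuous_measurable_EFin => //; exact: continuous_gauss_shift.
  + by move=> v _; rewrite lee_fin expR_ge0.
  + by rewrite lee_fin mulr_ge0 ?expR_ge0 ?ltW.
- by move=> x y _ _ xy; rewrite ltrD2r ltr_pM2l.
- by move=> x _; exact: cst_continuous.
- exact: is_cvg_cst.
- exact: cvg_cst.
- split; first by move=> x _; exact: ex_derive.
  apply: cvg_at_left_filter; apply: cvgD; last exact: cvg_cst.
  by apply: cvgM; [exact: cvg_cst | exact: cvg_id].
- apply: (cvg_comp (fun x => g * x) (fun r => r + K / g)).
  + exact: gt0_cvgMrNy g0 cvg_id.
  + exact: cvg_addrr_Ny.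
- by apply: continuous_subspaceT; exact: continuous_gauss_fun.
- by move=> x _; exact: gauss_fun_ge0.
Qed.

Lemma integralNy0_gt0 (f : R -> R) : continuous f -> (forall x, 0 <= f x) ->
  (forall x, x < 0 -> 0 < f x) -> (0 < \int[mu]_(x in `]-oo, 0%R]) (f x)%:E)%E.
Proof.
move=> cf f0 fNgt0.
have [m m_in f_min] : exists2 m : R, m \in `[-2, -1] &
    forall t : R, t \in `[-2, -1] -> f m <= f t.
  by apply: EVT_min; [rewrite lerN2 ler1n | exact: continuous_subspaceT].
have fm_gt0 : 0 < f m.
  apply: fNgt0; move: m_in; rewrite in_itv /= => /andP[_].
  by move/le_lt_trans; apply; rewrite oppr_lt0.
apply: (@lt_le_trans _ _ (\int[mu]_(x in `[(-2)%R, (-1)%R]) (f m)%:E)%E).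
  rewrite integral_cst //.
  change (0 < (f m)%:E * lebesgue_measure (`[(-2)%R, (-1)%R] : set R))%E.
  rewrite lebesgue_measure_itv /= lte_fin ltrN2 ltr1n /=.
  by rewrite -EFinD -EFinM lte_fin mulr_gt0 // subr_gt0 ltrN2 ltr1n.
apply: (@le_trans _ _ (\int[mu]_(x in `[(-2)%R, (-1)%R]) (f x)%:E)%E).
  apply: ge0_le_integral => //.
  - by move=> x _; rewrite lee_fin ltW.
  - exact: continuous_measurable_EFin.
apply: ge0_subset_integral => //.
- exact: continuous_measurable_EFin.
- by move=> x _; rewrite lee_fin.
- move=> x /=; rewrite !in_itv /= => /andP[_ x_le]; apply: le_trans x_le _.
  by rewrite oppr_le0.
Qed.

Definition gauss_tail (g K : R) : R :=
  fine (\int[mu]_(v in `]-oo, 0%R]) (gauss_shift g K v)%:E).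

Lemma integral_gauss_tail g K : 0 < g ->
  (\int[mu]_(v in `]-oo, 0%R]) (gauss_shift g K v)%:E)%E = (gauss_tail g K)%:E.
Proof.
move=> g0; rewrite /gauss_tail fineK //.
have := integralNy_gauss (K / g); rewrite integralNy_gauss_shift //.
have : (0 <= \int[mu]_(v in `]-oo, 0%R]) (gauss_shift g K v)%:E)%E.
  by apply: integral_ge0 => t _; rewrite lee_fin expR_ge0.
case: (\int[mu]_(v in _) _)%E => [r||] //= _.
by rewrite gt0_muley // lte_fin mulr_gt0 ?expR_gt0.
Qed.

Lemma erf_gauss_tail g K : 0 < g ->
  Num.sqrt pi / 2 * (1 + erf (K / g)) = g * expR (- (K / g) ^+ 2) * gauss_tail g K.
Proof.
move=> g0; apply/EFin_inj.
by rewrite -integralNy_gauss integralNy_gauss_shift // integral_gauss_tail.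
Qed.

Lemma gauss_tail_gt0 g K : 0 < g -> 0 < gauss_tail g K.
Proof.
move=> g0; rewrite -lte_fin -integral_gauss_tail //.
apply: integralNy0_gt0 => [|x|x _];
  [exact: continuous_gauss_shift | exact: expR_ge0 | exact: expR_gt0].
Qed.

Lemma gauss_tail_decreasing g1 g2 K : 0 < g1 -> g1 < g2 ->
  gauss_tail g2 K < gauss_tail g1 K.
Proof.
move=> g1_gt0 g12; have g2_gt0 := lt_trans g1_gt0 g12.
pose D v := gauss_shift g1 K v - gauss_shift g2 K v.
have D_gt0 : (0 < \int[mu]_(v in `]-oo, 0%R]) (D v)%:E)%E.
  apply: integralNy0_gt0 => [x|x|x x0]; rewrite ?subr_ge0 ?subr_gt0.
  - by apply: continuousB; exact: continuous_gauss_shift.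
  - exact: gauss_shift_le.
  - by apply: gauss_shift_lt; rewrite ?ltr0_neq0.
have split1 : (\int[mu]_(v in `]-oo, 0%R]) (gauss_shift g1 K v)%:E =
   \int[mu]_(v in `]-oo, 0%R]) (gauss_shift g2 K v)%:E +
   \int[mu]_(v in `]-oo, 0%R]) (D v)%:E)%E.
  rewrite -ge0_integralD //.
  - by apply: eq_integral => v _; rewrite -EFinD addrC subrK.
  - by move=> v _; rewrite lee_fin expR_ge0.
  - by apply: continuous_measurable_EFin => //; exact: continuous_gauss_shift.
  - by move=> v _; rewrite lee_fin subr_ge0 gauss_shift_le.
  - apply: continuous_measurable_EFin => // x.
    by apply: continuousB; exact: continuous_gauss_shift.
rewrite -lte_fin -!integral_gauss_tail // split1 lteDl //.
by rewrite integral_gauss_tail.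
Qed.

Definition erf_ratio (a s g : R) : R :=
  g * expR (- a ^+ 2 / (2 * (g * s) ^+ 2)) / (1 + erf (a / (Num.sqrt 2 * (g * s)))).

Lemma erf_ratio_gauss_tail a s g : 0 < s -> 0 < g ->
  erf_ratio a s g = Num.sqrt pi / 2 / gauss_tail g (a / (Num.sqrt 2 * s)).
Proof.
move=> s0 g0; set K := a / (Num.sqrt 2 * s).
have sqrt2_gt0 : 0 < Num.sqrt (2 : R) by rewrite sqrtr_gt0.
have sqrtpi_gt0 : 0 < Num.sqrt (pi : R) by rewrite sqrtr_gt0 pi_gt0.
have erf_arg : a / (Num.sqrt 2 * (g * s)) = K / g by rewrite /K; field; rewrite !gt_eqF.
have exp_arg : a ^+ 2 / (2 * (g * s) ^+ 2) = (K / g) ^+ 2.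
  by rewrite -erf_arg expr_div_n !exprMn sqr_sqrtr // ler0n.
have tail_gt0 : 0 < gauss_tail g K by exact: gauss_tail_gt0.
rewrite /erf_ratio erf_arg mulNr exp_arg.
have -> : 1 + erf (K / g) = 2 / Num.sqrt pi * (g * expR (- (K / g) ^+ 2) * gauss_tail g K).
  by rewrite -erf_gauss_tail //; field; rewrite gt_eqF.
by field; rewrite !gt_eqF ?expR_gt0.
Qed.

Lemma erf_ratio_increasing a s g1 g2 : 0 < s -> 0 < g1 -> g1 < g2 ->
  erf_ratio a s g1 < erf_ratio a s g2.
Proof.
move=> s0 g1_gt0 g12; have g2_gt0 := lt_trans g1_gt0 g12.
rewrite !erf_ratio_gauss_tail // ltr_pM2l ?divr_gt0 ?sqrtr_gt0 ?pi_gt0 //.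
by rewrite ltf_pV2 ?posrE ?gauss_tail_gt0 ?gauss_tail_decreasing.
Qed.

End gauss_integral.

Lemma inf_image_min {T : Type} {R : realType} {f : T -> R} {A : set T} {m : T} :
  A m -> (forall x, A x -> f m <= f x) -> inf (f @` A) = f m.
Proof.
move=> Am f_min; have f_lb : lbound (f @` A) (f m) by move=> _ [x Ax <-]; exact: f_min.
apply/eqP; rewrite eq_le; apply/andP; split.
- by apply: ge_inf; [exists (f m) | exists m].
- by apply: lb_le_inf => //; exists (f m), m.
Qed.

Lemma Mg_itv (R : realType) (g0 eps g : R) : 0 < g0 -> 0 <= eps < 1 ->
  Mg g0 eps g <-> g \in `[g0 * Num.sqrt (1 - eps), g0 * Num.sqrt (1 + eps)].
Proof.
move=> g0_gt0 /andP[eps_ge0 eps_lt1].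
have sqr_end c : 0 <= c -> c * g0 ^+ 2 = (g0 * Num.sqrt c) ^+ 2.
  by move=> c_ge0; rewrite exprMn sqr_sqrtr // mulrC.
have gl_gt0 : 0 < g0 * Num.sqrt (1 - eps) by rewrite mulr_gt0 // sqrtr_gt0 subr_gt0.
rewrite /Mg /= !sqr_end; last 2 first.
- by rewrite addr_ge0.
- by rewrite subr_ge0 ltW.
rewrite in_itv /=.
have gl_ge0 := ltW gl_gt0.
have gu_ge0 : 0 <= g0 * Num.sqrt (1 + eps) by rewrite mulr_ge0 ?sqrtr_ge0 ?ltW.
split=> [[/ltW g_ge0]|/andP[gl_le le_gu]].
  by rewrite !ler_sqr ?nnegrE.
have g_ge0 := le_trans gl_ge0 gl_le.
by split; [exact: lt_le_trans gl_le | rewrite !ler_sqr ?nnegrE ?gl_le].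
Qed.

Section cascading_risk.
Variables (R : realType) (n : nat) (lam : 'I_n -> R) (q : 'I_n -> 'cV[R]_n).
Variables (beta tau : R).

Local Notation sigma_kl := (sigma_kl lam q beta tau).
Local Notation sigma_k := (sigma_k lam q beta tau).
Local Notation rho_kl := (rho_kl lam q beta tau).

Lemma sigma_kl_scale g k l : sigma_kl g k l = g ^+ 2 * sigma_kl 1 k l.
Proof. by rewrite /Defs.sigma_kl expr1n mul1r !mulrA. Qed.

Lemma sigma_k_scale g k : 0 <= g -> sigma_k g k = g * sigma_k 1 k.
Proof.
by move=> g0; rewrite /Defs.sigma_k sigma_kl_scale sqrtrM ?sqr_ge0 // sqrtr_sqr ger0_norm.
Qed.

Lemma rho_kl_scale g k l : 0 < g -> rho_kl g k l = rho_kl 1 k l.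
Proof.
move=> g0; rewrite /Defs.rho_kl sigma_kl_scale !(sigma_k_scale _ _ (ltW g0)).
move: (sigma_kl 1 k l) (sigma_k 1 k) (sigma_k 1 l) => s sk sl.
by rewrite mulrACA -expr2 invfM mulrACA divff ?mul1r // expf_neq0 // gt_eqF.
Qed.

(* [rho_kl] divides by [sigma_k], and [x / 0 = 0]. *)
Lemma rho_kl_neq0_sigma_k_gt0 k l :
  rho_kl 1 k l != 0 -> 0 < sigma_k 1 k /\ 0 < sigma_k 1 l.
Proof.
move=> rho_neq0; split; rewrite lt0r sqrtr_ge0 andbT; apply: contraNneq rho_neq0;
  by rewrite /Defs.rho_kl => ->; rewrite !(mulr0, mul0r) invr0 mulr0.
Qed.

Variables (d dstar : R) (i j : 'I_n.-1).

Local Notation condE := (fun g => condE lam q beta tau d dstar g i j).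
Local Notation rho := (rho_kl 1 j i).

Lemma condE_erf_ratio g : 0 < g ->
  condE g = d - Num.sqrt (2 / pi) * rho * sigma_k 1 j *
                erf_ratio (dstar - d) (sigma_k 1 i) g.
Proof.
move=> g0; rewrite /Defs.condE rho_kl_scale // !(sigma_k_scale _ _ (ltW g0)) /erf_ratio.
by ring.
Qed.

Lemma hfun_condE g0 e : 0 < g0 -> -1 < e ->
  hfun lam q beta tau d dstar g0 i j e = condE (g0 * Num.sqrt (1 + e)).
Proof.
move=> g0_gt0 e_gtN1; have e1_gt0 : 0 < 1 + e by rewrite -ltrBlDl sub0r.
have g_gt0 : 0 < g0 * Num.sqrt (1 + e) by rewrite mulr_gt0 ?sqrtr_gt0.
rewrite /hfun /Defs.condE (rho_kl_scale _ _ _ g0_gt0) (rho_kl_scale _ _ _ g_gt0).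
rewrite !(sigma_k_scale _ _ (ltW g0_gt0)) !(sigma_k_scale _ _ (ltW g_gt0)).
set si := sigma_k 1 i; set sj := sigma_k 1 j.
have erf_arg :
    Num.sqrt (2 * (1 + e)) * (g0 * si) = Num.sqrt 2 * (g0 * Num.sqrt (1 + e) * si).
  by rewrite sqrtrM ?ler0n //; ring.
have exp_arg : 2 * (g0 * si) ^+ 2 * (1 + e) = 2 * (g0 * Num.sqrt (1 + e) * si) ^+ 2.
  by rewrite !exprMn (sqr_sqrtr (ltW e1_gt0)); ring.
by rewrite erf_arg exp_arg; ring.
Qed.

Lemma condE_increasing g1 g2 : rho < 0 -> 0 < g1 -> g1 < g2 -> condE g1 < condE g2.
Proof.
move=> rho_lt0 g1_gt0 g12; have g2_gt0 := lt_trans g1_gt0 g12.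
have [sj_gt0 si_gt0] := rho_kl_neq0_sigma_k_gt0 _ _ (ltr0_neq0 rho_lt0).
rewrite !condE_erf_ratio // ltrD2l ltrN2 ltr_nM2l ?erf_ratio_increasing //.
by rewrite pmulr_llt0 // pmulr_rlt0 // sqrtr_gt0 divr_gt0 ?pi_gt0.
Qed.

Lemma condE_decreasing g1 g2 : 0 < rho -> 0 < g1 -> g1 < g2 -> condE g2 < condE g1.
Proof.
move=> rho_gt0 g1_gt0 g12; have g2_gt0 := lt_trans g1_gt0 g12.
have [sj_gt0 si_gt0] := rho_kl_neq0_sigma_k_gt0 _ _ (lt0r_neq0 rho_gt0).
rewrite !condE_erf_ratio // ltrD2l ltrN2 ltr_pM2l ?erf_ratio_increasing //.
by do 2 apply: mulr_gt0 => //; rewrite sqrtr_gt0 divr_gt0 ?pi_gt0.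
Qed.

Lemma condE_rho0 g : rho = 0 -> 0 < g -> condE g = d.
Proof. by move=> rho0 g0 /=; rewrite condE_erf_ratio // rho0 !(mulr0, mul0r) subr0. Qed.

Variables (g0 eps : R).
Hypotheses (g0_gt0 : 0 < g0) (eps_gt0 : 0 < eps) (eps_lt1 : eps < 1).

Local Notation DRrisk := (DRrisk lam q beta tau d dstar g0 eps i j).
Local Notation h := (hfun lam q beta tau d dstar g0 i j).
Local Notation gl := (g0 * Num.sqrt (1 - eps)).
Local Notation gu := (g0 * Num.sqrt (1 + eps)).

Let in_Mg g : Mg g0 eps g <-> g \in `[gl, gu].
Proof. by apply: Mg_itv; rewrite // ltW. Qed.

Let gl_gt0 : 0 < gl. Proof. by rewrite mulr_gt0 // sqrtr_gt0 subr_gt0. Qed.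

Let gl_le_gu : gl <= gu.
Proof.
have eps_ge0 := ltW eps_gt0.
by rewrite ler_pM2l // ler_sqrt ?addr_ge0 // lerD2l (le_trans _ eps_ge0) // oppr_le0.
Qed.

Lemma DRrisk_argmin {m} : Mg g0 eps m ->
  (forall g, Mg g0 eps g -> condE m <= condE g) -> DRrisk = d / condE m - 1.
Proof. by move=> Mm m_min; rewrite /Defs.DRrisk (inf_image_min Mm m_min). Qed.

Lemma DRrisk_rho_lt0 : rho < 0 -> DRrisk = d / h (- eps) - 1.
Proof.
move=> rho_lt0; rewrite hfun_condE ?ltrN2 //.
apply: DRrisk_argmin => [|g /in_Mg]; first by apply/in_Mg; rewrite in_itv /= lexx gl_le_gu.
rewrite in_itv /= => /andP[]; rewrite le_eqVlt => /predU1P[-> //|gl_lt _].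
exact/ltW/condE_increasing.
Qed.

Lemma DRrisk_rho_gt0 : 0 < rho -> DRrisk = d / h eps - 1.
Proof.
move=> rho_gt0; rewrite hfun_condE ?(lt_trans _ eps_gt0) ?ltrN10 //.
apply: DRrisk_argmin => [|g /in_Mg]; first by apply/in_Mg; rewrite in_itv /= lexx gl_le_gu.
rewrite in_itv /= => /andP[gl_le]; rewrite le_eqVlt => /predU1P[-> //|lt_gu].
exact/ltW/condE_decreasing/lt_gu/(lt_le_trans gl_gt0).
Qed.

Lemma DRrisk_rho0 : d != 0 -> rho = 0 -> DRrisk = 0.
Proof.
move=> d_neq0 rho0; have Mgl : Mg g0 eps gl.
  by apply/in_Mg; rewrite in_itv /= lexx gl_le_gu.
rewrite (DRrisk_argmin Mgl) /= ?condE_rho0 ?divff ?subrr //.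
by move=> g [g_gt0 _] /=; rewrite !condE_rho0.
Qed.

End cascading_risk.

Theorem theorem2 (R : realType) (n : nat) (W : 'M[R]_n)
  (lam : 'I_n -> R) (q : 'I_n -> 'cV[R]_n)
  (beta tau d delta_i c g0 eps : R) (i j : 'I_n.-1) :
  (3 <= n)%N ->
  conn_pos_weighted_graph W ->
  (forall m, laplacian W *m q m = lam m *: q m) ->
  (forall a b, (q a)^T *m q b = ((a == b)%:R)%:M) ->
  (forall a b : 'I_n, (a <= b)%N -> lam a <= lam b) ->
  (forall m : 'I_n, (m : nat) = 0%N ->
     lam m = 0 /\ q m = (Num.sqrt (n%:R))^-1 *: const_mx 1) ->
  (forall m : 'I_n, (m : nat) = 1%N -> 0 < lam m) ->
  0 < d -> 0 < beta -> 0 < tau ->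
  (forall m : 'I_n, (1 <= m)%N -> stab_region (lam m * tau) (beta * tau)) ->
  0 <= delta_i -> 0 < c -> 0 < g0 -> 0 < eps < 1 ->
  i != j ->
  let dstar := d / (delta_i + c) in
  let E := fun g => condE lam q beta tau d dstar g i j in
  let rho := rho_kl lam q beta tau g0 j i in
  let h := hfun lam q beta tau d dstar g0 i j in
  ((rho < 0 -> forall g1 g2, 0 < g1 -> g1 < g2 -> E g1 < E g2) /\
   (0 < rho -> forall g1 g2, 0 < g1 -> g1 < g2 -> E g2 < E g1)) /\
  (rho < 0 -> DRrisk lam q beta tau d dstar g0 eps i j = d / h (- eps) - 1) /\
  (0 < rho -> DRrisk lam q beta tau d dstar g0 eps i j = d / h eps - 1) /\
  (rho = 0 -> DRrisk lam q beta tau d dstar g0 eps i j = 0).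
Proof.
(* The spectral and stability hypotheses only justify the closed form [condE];
   the claims follow from that formula alone. *)
move=> _ _ _ _ _ _ _ d_gt0 _ _ _ _ _ g0_gt0 /andP[eps_gt0 eps_lt1] _ dstar E rho h.
have -> : rho = rho_kl lam q beta tau 1 j i by exact: rho_kl_scale.
split; first by split=> rho_sign g1 g2; [exact: condE_increasing | exact: condE_decreasing].
split; first exact: DRrisk_rho_lt0.
split; first exact: DRrisk_rho_gt0.
by apply: DRrisk_rho0; rewrite // gt_eqF.
Qed.
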